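(* Consider an instance of the constructive \$-protection problem (all voter weights equal to 1). Suppose the defender succeeds by awarding a set $\mathcal{V}_F\subseteq\mathcal{V}$ with $\sum_{v_j\in\mathcal{V}_F}p_j^a\le F$. If $v_{j'}\prec v_j$, $v_{j'}\in\mathcal{V}_F$ and $v_j\notin\mathcal{V}_F$, then the defender also succeeds by awarding $(\mathcal{V}_F\setminus\{v_{j'}\})\cup\{v_j\}$.
   Context: Election model. Candidates $\mathcal{C}=\{c_1,\dots,c_m\}$, voters $\mathcal{V}=\{v_1,\dots,v_n\}$; voter $v_j$ has a preference list $\tau_j$ (a linear order of $\mathcal{C}$), weight $w_j$, awarding price $p_j^a\in\mathbb{Z}_{>0}$, bribing price $p_j^b\in\mathbb{Z}_{>0}$. A scoring rule $\alpha=(\alpha_1\ge\cdots\ge\alpha_m)$ of nonnegative integers gives the candidate at position $z$ of $v_j$'s list $w_j\alpha_z$ points; total score is the sum over voters. In the constructive \$-protection problem all $w_j=1$, there is a designated candidate $c^\star$, a defense budget $F$ and an attack budget $B$. Given awarded voters $\mathcal{V}_F$, the attacker may choose $\mathcal{V}_B\subseteq\mathcal{V}\setminus\mathcal{V}_F$ with $\sum_{v_j\in\mathcal{V}_B}p_j^b\le B$ and replace each list in $\mathcal{V}_B$ by an arbitrary list; the defender succeeds with $\mathcal{V}_F$ (total awarding price at most $F$) if no such bribery makes $c^\star$ obtain a total score strictly higher than every other candidate. Dominance: $v_{j'}\prec v_j$ if either (i) $\tau_j=\tau_{j'}$, $w_j\ge w_{j'}$, $p_j^a\le p_{j'}^a$,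 $p_j^b\le p_{j'}^b$ with at least one of these three inequalities strict; or (ii) $\tau_j=\tau_{j'}$, $w_j=w_{j'}$, $p_j^a=p_{j'}^a$, $p_j^b=p_{j'}^b$ and $j'<j$. *)

From mathcomp Require Import all_boot all_order all_fingroup.
Set Implicit Arguments. Unset Strict Implicit. Unset Printing Implicit Defensive.

(* Candidates are 'I_m, voters are 'I_n.
   A preference list is a permutation tau : {perm 'I_m}; tau z is the
   candidate at position z (position 0 = top).  The position of candidate c
   in the list is (tau^-1 c). *)

Section Election.
Variables (m n : nat).

Definition scoring_rule (alpha : 'I_m -> nat) : Prop :=
  forall z1 z2 : 'I_m, z1 <= z2 -> alpha z2 <= alpha z1.

Definition score (alpha : 'I_m -> nat) (w : 'I_n -> nat)
  (tau : 'I_n -> {perm 'I_m}) (c : 'I_m) : nat :=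
  \sum_(j < n) w j * alpha ((tau j)^-1%g c).

Definition bribed (tau : 'I_n -> {perm 'I_m}) (VB : {set 'I_n})
  (sigma : 'I_n -> {perm 'I_m}) : 'I_n -> {perm 'I_m} :=
  fun j => if j \in VB then sigma j else tau j.

Definition unique_winner alpha w tau (cstar : 'I_m) : Prop :=
  forall c : 'I_m, c != cstar -> score alpha w tau c < score alpha w tau cstar.

Definition defender_succeeds alpha w tau (pa pb : 'I_n -> nat)
  (cstar : 'I_m) (F B : nat) (VF : {set 'I_n}) : Prop :=
  \sum_(j in VF) pa j <= F /\
  forall (VB : {set 'I_n}) (sigma : 'I_n -> {perm 'I_m}),
    VB \subset ~: VF -> \sum_(j in VB) pb j <= B ->
    ~ unique_winner alpha w (bribed tau VB sigma) cstar.

(* dominance: dominated j' j  means  v_j' \prec v_j *)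
Definition dominated (tau : 'I_n -> {perm 'I_m}) (w pa pb : 'I_n -> nat)
  (j' j : 'I_n) : Prop :=
  (tau j = tau j' /\ w j' <= w j /\ pa j <= pa j' /\ pb j <= pb j' /\
     ((w j' < w j) || (pa j < pa j') || (pb j < pb j')))
  \/
  (tau j = tau j' /\ w j = w j' /\ pa j = pa j' /\ pb j = pb j' /\ j' < j).

End Election.

From mathcomp Require Import all_boot all_order all_fingroup.

(* Let s be the transposition of v_j and v_j'.  As tau j = tau j' and all
   weights are 1, s preserves lists and weights, and since v_j is at most as
   expensive as v_j', s does not increase the price of a set avoiding v_j.  The
   new defence is the preimage of V_F under s, and an attack on it is carried by
   s to an attack on V_F that is no more expensive and yields the same scores. *)

Set Implicit Arguments. Unset Strict Implicit. Unset Printing Implicit Defensive.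

Lemma preimset_tperm (T : finType) (x y : T) (A : {set T}) :
  y \in A -> x \notin A -> tperm x y @^-1: A = x |: (A :\ y).
Proof.
move=> yA xA; apply/setP=> i; rewrite !inE.
case: tpermP => [->|->|/eqP/negbTE-> /eqP/negbTE->] //.
- by rewrite eqxx yA.
- by rewrite eqxx /= orbF (negbTE xA); apply/esym/eqP => yx; rewrite -yx yA in xA.
Qed.

Lemma preimset_involutive (T : finType) (f : T -> T) (A : {set T}) :
  involutive f -> f @^-1: (f @^-1: A) = A.
Proof. by move=> fK; apply/setP=> i; rewrite !inE fK. Qed.

Lemma sum_preimset_tperm_le (T : finType) (x y : T) (A : {set T}) (p : T -> nat) :
  p x <= p y -> x \notin A ->
  \sum_(i in tperm x y @^-1: A) p i <= \sum_(i in A) p i.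
Proof.
move=> pxy xA.
rewrite (reindex_inj (@perm_inj _ (tperm x y))) /=.
under eq_bigl => i do rewrite inE tpermK.
apply: leq_sum => i iA; case: tpermP => [ix|-> //|//].
by rewrite -ix iA in xA.
Qed.

Section VoterPermutation.
Variables (m n : nat) (alpha : 'I_m -> nat) (w : 'I_n -> nat).
Variables (tau : 'I_n -> {perm 'I_m}) (s : {perm 'I_n}).
Hypotheses (w_s : forall i, w (s i) = w i) (tau_s : forall i, tau (s i) = tau i).

Lemma score_perm (t t' : 'I_n -> {perm 'I_m}) (c : 'I_m) :
  (forall i, t' i = t (s i)) -> score alpha w t' c = score alpha w t c.
Proof.
move=> t't; rewrite /score [RHS](reindex_inj (@perm_inj _ s)) /=.
by apply: eq_bigr => i _; rewrite t't w_s.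
Qed.

Lemma bribed_perm (VB : {set 'I_n}) (sigma : 'I_n -> {perm 'I_m}) (i : 'I_n) :
  bribed tau (s @^-1: VB) (fun k => sigma (s k)) i = bribed tau VB sigma (s i).
Proof. by rewrite /bribed inE tau_s. Qed.

Lemma unique_winner_bribed_perm VB sigma (cstar : 'I_m) :
  unique_winner alpha w (bribed tau VB sigma) cstar ->
  unique_winner alpha w (bribed tau (s @^-1: VB) (fun k => sigma (s k))) cstar.
Proof.
move=> win c ccstar; rewrite !(score_perm _ (bribed_perm VB sigma)).
exact: win.
Qed.

End VoterPermutation.

Lemma dominated_prices (m n : nat) (tau : 'I_n -> {perm 'I_m})
    (w pa pb : 'I_n -> nat) (j' j : 'I_n) :
  dominated tau w pa pb j' j ->
  [/\ tau j = tau j', pa j <= pa j' & pb j <= pb j'].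
Proof. by case=> [[-> [_ [? [? _]]]]|[-> [_ [-> [-> _]]]]]. Qed.

Theorem lemma8 (m n : nat) (alpha : 'I_m -> nat) (w : 'I_n -> nat)
  (tau : 'I_n -> {perm 'I_m}) (pa pb : 'I_n -> nat) (cstar : 'I_m)
  (F B : nat) (VF : {set 'I_n}) (j j' : 'I_n) :
  scoring_rule alpha ->
  (forall i, w i = 1) ->
  (forall i, 0 < pa i) -> (forall i, 0 < pb i) ->
  defender_succeeds alpha w tau pa pb cstar F B VF ->
  dominated tau w pa pb j' j ->
  j' \in VF -> j \notin VF ->
  defender_succeeds alpha w tau pa pb cstar F B (j |: (VF :\ j')).
Proof.
move=> _ w1 _ _ [awardF attack_fails].
move=> /dominated_prices[tau_jj' pa_jj' pb_jj'] j'VF jVF.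
rewrite -preimset_tperm //; set s := tperm j j'.
have tau_s i : tau (s i) = tau i by rewrite /s; case: tpermP => // ->.
have w_s i : w (s i) = w i by rewrite !w1.
split.
  exact: leq_trans (sum_preimset_tperm_le pa_jj' jVF) awardF.
move=> VB sigma VBsub costB.
have jVB : j \notin VB.
  by apply/negP => /(subsetP VBsub); rewrite !inE /s tpermL j'VF.
have VBsub' : s @^-1: VB \subset ~: VF.
  rewrite -[~: VF](preimset_involutive _ (@tpermK _ j j')) preimsetC.
  by apply: preimsetS.
have costB' : \sum_(i in s @^-1: VB) pb i <= B.
  exact: leq_trans (sum_preimset_tperm_le pb_jj' jVB) costB.
apply: contra_not (attack_fails _ (fun k => sigma (s k)) VBsub' costB').
exact: unique_winner_bribed_perm.
Qed.
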